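(* Let $m,n \geq 2$ be integers with $(m,n) \neq (2,2)$. Then $2$ is the unique typical subrank of real tensors in $\mathbb{R}^2 \otimes \mathbb{R}^m \otimes \mathbb{R}^n$.
   Context: For $r \geq 0$ let $I_r := \sum_{j=1}^r e_j \otimes e_j \otimes e_j$. The subrank of $T \in \mathbb{R}^{n_1} \otimes \mathbb{R}^{n_2} \otimes \mathbb{R}^{n_3}$ is $Q(T) := \max\{ r \mid \exists\ \mathbb{R}\text{-linear } \varphi_i : \mathbb{R}^{n_i} \to \mathbb{R}^r,\ (\varphi_1 \otimes \varphi_2 \otimes \varphi_3) T = I_r\}$. An integer $r$ is a typical subrank of the format $n_1\times n_2\times n_3$ if $\{T \mid Q(T) = r\}$ contains a nonempty Euclidean-open subset of $\mathbb{R}^{n_1} \otimes \mathbb{R}^{n_2} \otimes \mathbb{R}^{n_3}$. *)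

From HB Require Import structures.
From mathcomp Require Import all_boot all_order all_algebra.
From mathcomp Require Import all_classical all_reals all_analysis.
Set Implicit Arguments. Unset Strict Implicit. Unset Printing Implicit Defensive.
Import Order.TTheory GRing.Theory Num.Theory.
Import numFieldNormedType.Exports.
Local Open Scope classical_set_scope.
Local Open Scope ring_scope.

(* A tensor in R^n1 (x) R^n2 (x) R^n3, stored (flattened) as an n1 x (n2*n3)
   matrix; the coordinate (i,j,k) is entry (i, mxvec_index j k).  The type
   'M[R]_(n1, n2*n3) carries MathComp-Analysis' product (= Euclidean)
   topology. *)
Notation tensor R n1 n2 n3 := (matrix R n1 (n2 * n3)%N).

Definition tentry (R : realType) n1 n2 n3 (T : tensor R n1 n2 n3)
  (i : 'I_n1) (j : 'I_n2) (k : 'I_n3) : R := T i (mxvec_index j k).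

(* (phi1 (x) phi2 (x) phi3) T = I_r, with the R-linear maps phi_i : R^{n_i} -> R^r
   given by their r x n_i matrices A, B, C. *)
Definition restricts_to_unit (R : realType) n1 n2 n3 (T : tensor R n1 n2 n3)
  (r : nat) : Prop :=
  exists (A : 'M[R]_(r, n1)) (B : 'M[R]_(r, n2)) (C : 'M[R]_(r, n3)),
    forall (a b c : 'I_r),
      \sum_(i < n1) \sum_(j < n2) \sum_(k < n3)
         A a i * B b j * C c k * tentry T i j k
      = ((a == b) && (b == c))%:R.

Definition is_subrank (R : realType) n1 n2 n3 (T : tensor R n1 n2 n3)
  (r : nat) : Prop :=
  restricts_to_unit T r /\ (forall s, restricts_to_unit T s -> (s <= r)%N).

Definition typical_subrank (R : realType) (n1 n2 n3 r : nat) : Prop :=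
  exists U : set (tensor R n1 n2 n3),
    open U /\ U !=set0 /\ U `<=` [set T | is_subrank T r].

From HB Require Import structures.
From mathcomp Require Import all_boot all_order all_algebra.
From mathcomp Require Import all_classical all_reals all_analysis.
From mathcomp Require Import ring.
Set Implicit Arguments. Unset Strict Implicit. Unset Printing Implicit Defensive.
Import Order.TTheory GRing.Theory Num.Theory.
Import numFieldNormedType.Exports.
Local Open Scope classical_set_scope.
Local Open Scope ring_scope.

(* Q(T) <= 2 for every T, since a restriction (A, B, C) of T to I_r gives
   A W = 1 for the 2 x r matrix W of diagonal contractions.  Conversely, look
   at a 2 x 2 x 3 subtensor x of T (two coordinates of one of the last two
   factors, three of the other: this is where (m, n) <> (2, 2) is used).
   Taking for the rows of C the cross products gamma_c = x_{0,c+1} × x_{1,c+1}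
   makes both contracted slices x_i gamma^T diagonal, since their off-diagonal
   entries are triple products with a repeated vector.  If the 2 x 2 matrix of
   diagonal entries is invertible, i.e. if the polynomial core_det x does not
   vanish, its inverse completes the restriction to I_2.  As core_det is not
   identically zero, {core_det <> 0} is open and dense: Q = 2 there, and it
   meets every nonempty open set, so no other value is typical. *)

Lemma mxsubE (K : pzRingType) m n m' n' (f : 'I_m' -> 'I_m) (g : 'I_n' -> 'I_n)
    (A : 'M[K]_(m, n)) :
  mxsub f g A = rowsub f 1%:M *m A *m (rowsub g 1%:M)^T.
Proof. by rewrite trmx_mxsub trmx1 mulmx_colsub mulmx1 -rowsubE -mxsubcr. Qed.

Lemma det_mx22 (K : comPzRingType) (A : 'M[K]_2) :
  \det A = A 0 0 * A 1 1 - A 0 1 * A 1 0.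
Proof.
rewrite (expand_det_row A 0) !big_ord_recl big_ord0 /cofactor !det_mx11 !mxE /=.
rewrite addr0 expr0 mul1r expr1 mulN1r mulrN.
by congr (A _ _ * A _ _ - A _ _ * A _ _); apply/val_inj.
Qed.

Lemma poly_nonroot_near (R : realFieldType) (p : {poly R}) (a e : R) :
  p != 0 -> 0 < e -> exists2 t, `|t - a| < e & ~~ root p t.
Proof.
move=> p0 e0; pose s := [seq a + e / k.+2%:R | k <- iota 0 (size p)].
have [all_roots|] := boolP (all (root p) s); last first.
  case/allPn=> _ /mapP[k _ ->] nroot; exists (a + e / k.+2%:R) => //.
  rewrite addrAC subrr add0r ger0_norm ?divr_ge0 ?ltW //.
  by rewrite ltr_pdivrMr ?ltr0Sn // ltr_pMr // ltr1n.
suff /(max_poly_roots p0 all_roots) : uniq s by rewrite size_map size_iota ltnn.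
rewrite map_inj_uniq ?iota_uniq // => k k' /addrI /(mulfI (lt0r_neq0 e0)).
by move/invr_inj/eqP; rewrite eqr_nat => /eqP[].
Qed.

Lemma dense_nonvanishing (R : realType) (V : normedModType R) (f : V -> R) (y : V) :
  (forall x, exists q : {poly R}, forall t, q.[t] = f (x + t *: (y - x))) ->
  f y != 0 -> dense [set x | f x != 0].
Proof.
move=> f_line fy O [x Ox] oO.
pose line t := x + t *: (y - x).
have [q qE] : exists q : {poly R}, forall t, q.[t] = f (line t) := f_line x.
have q0 : q != 0.
  apply: contra_neq fy => q0.
  by rewrite -[y](addrNK x) addrC -[y - x]scale1r -qE q0 horner0.
have line_cont : {for 0, continuous line}.
  by apply: continuousD; [exact: cst_continuous | exact: continuousZr_tmp].
have /nbhs_ballP[e e0 Oe] : nbhs (0 : R) (line @^-1` O).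
  by apply: line_cont; rewrite /line scale0r addr0; apply: open_nbhs_nbhs.
have [t te qt] := poly_nonroot_near 0 q0 e0.
exists (line t); split; last by rewrite /= -qE.
by apply: Oe; rewrite -ball_normE /= distrC.
Qed.

Section Restriction.
Variables (R : realType) (n1 n2 n3 : nat).
Implicit Types (T : tensor R n1 n2 n3).

Definition slice T (i : 'I_n1) : 'M[R]_(n2, n3) := \matrix_(j, k) tentry T i j k.

Definition tensor_of (h : 'I_n1 -> 'I_n2 -> 'I_n3 -> R) : tensor R n1 n2 n3 :=
  \matrix_(i, jk) mxvec (\matrix_(j, k) h i j k) 0 jk.

Lemma tentry_tensor_of h i j k : tentry (tensor_of h) i j k = h i j k.
Proof. by rewrite /tentry mxE mxvecE mxE. Qed.

Lemma restricts_to_unitP T r :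
  restricts_to_unit T r <->
  exists (A : 'M[R]_(r, n1)) (B : 'M[R]_(r, n2)) (C : 'M[R]_(r, n3)),
    forall a b c,
      \sum_i A a i * (B *m slice T i *m C^T) b c = ((a == b) && (b == c))%:R.
Proof.
suff contractE (A : 'M[R]_(r, n1)) (B : 'M[R]_(r, n2)) (C : 'M[R]_(r, n3)) a b c :
    \sum_i \sum_j \sum_k A a i * B b j * C c k * tentry T i j k
    = \sum_i A a i * (B *m slice T i *m C^T) b c.
  by split=> -[A [B [C h]]]; exists A, B, C => a b c; rewrite -h contractE.
apply: eq_bigr => i _; rewrite mxE big_distrr exchange_big /=.
apply: eq_bigr => k _; rewrite !mxE big_distrl big_distrr /=.
by apply: eq_bigr => j _; rewrite !mxE; ring.
Qed.

Lemma restricts_to_unit_leq T r : restricts_to_unit T r -> (r <= n1)%N.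
Proof.
move=> /restricts_to_unitP[A [B [C h]]].
pose W : 'M[R]_(n1, r) := \matrix_(i, b) (B *m slice T i *m C^T) b b.
have AW1 : A *m W = 1%:M.
  apply/matrixP => a b; have := h a b b; rewrite eqxx andbT !mxE => <-.
  by apply: eq_bigr => i _; rewrite mxE.
by rewrite -(mxrank1 R r) -AW1 (leq_trans (mxrankM_maxr _ _)) ?rank_leq_row.
Qed.

Lemma restricts_to_unit_diag T (B : 'M[R]_(n1, n2)) (C : 'M[R]_(n1, n3))
    (M : 'I_n1 -> 'M[R]_n1) :
  (forall i, B *m slice T i *m C^T = M i) -> (forall i, is_diag_mx (M i)) ->
  \matrix_(i, b) M i b b \in unitmx -> restricts_to_unit T n1.
Proof.
move=> BSC M_diag W_unit; apply/restricts_to_unitP.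
exists (invmx (\matrix_(i, b) M i b b)), B, C => a b c.
under eq_bigr do rewrite BSC.
have [<-|neq_bc] := eqVneq b c.
  move/matrixP/(_ a b): (mulVmx W_unit); rewrite andbT !mxE => <-.
  by apply: eq_bigr => i _; rewrite mxE.
by rewrite andbF big1 // => i _; rewrite (is_diag_mxP (M_diag i)) ?mulr0.
Qed.

Lemma restricts_to_unit_is_subrank T : restricts_to_unit T n1 -> is_subrank T n1.
Proof. by move=> TI; split=> // s; apply: restricts_to_unit_leq. Qed.

Lemma is_subrank_uniq T r s : is_subrank T r -> is_subrank T s -> r = s.
Proof. by move=> [Tr r_max] [Ts s_max]; apply/eqP; rewrite eqn_leq (s_max _ Tr) (r_max _ Ts). Qed.

Definition unique_typical_subrank r :=
  typical_subrank R n1 n2 n3 r /\ (forall s, typical_subrank R n1 n2 n3 s -> s = r).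

Lemma unique_typical_subrank_of_dense (G : set (tensor R n1 n2 n3)) r :
  open G -> dense G -> G `<=` [set T | is_subrank T r] -> unique_typical_subrank r.
Proof.
move=> oG dG sG; split.
  exists G; split=> //; split=> //.
  by have := dG setT; rewrite setTI; apply; [exists 0 | exact: openT].
move=> s [U [oU [U0 sU]]]; have [T [UT GT]] := dG U U0 oU.
exact: is_subrank_uniq (sU _ UT) (sG _ GT).
Qed.

End Restriction.

Section TripleProduct.
Variable K : comPzRingType.
Implicit Types u v w : 'I_3 -> K.

Definition cross v w (l : 'I_3) : K :=
  match val l with
  | 0 => v 1 * w 2 - v 2 * w 1
  | 1 => v 2 * w 0 - v 0 * w 2
  | _ => v 0 * w 1 - v 1 * w 0
  end.

Definition det3 u v w : K :=
  u 0 * (v 1 * w 2 - v 2 * w 1) - u 1 * (v 0 * w 2 - v 2 * w 0)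
  + u 2 * (v 0 * w 1 - v 1 * w 0).

Lemma sum_mul_cross u v w : \sum_l u l * cross v w l = det3 u v w.
Proof.
rewrite !big_ord_recl big_ord0 /cross /det3 /=.
have -> : (ord0 : 'I_3) = 0 by apply/val_inj.
have -> : (lift ord0 ord0 : 'I_3) = 1 by apply/val_inj.
have -> : (lift ord0 (lift ord0 ord0) : 'I_3) = 2 by apply/val_inj.
ring.
Qed.

Lemma det3_dup12 u w : det3 u u w = 0. Proof. by rewrite /det3; ring. Qed.
Lemma det3_dup13 u w : det3 u w u = 0. Proof. by rewrite /det3; ring. Qed.

Section Core.
Variable x : 'I_2 -> 'M[K]_(2, 3).

Definition core_cross : 'M[K]_(2, 3) :=
  \matrix_(c, l) cross (x 0 (c + 1)) (x 1 (c + 1)) l.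

Definition core_det : K :=
  det3 (x 0 0) (x 0 1) (x 1 1) * det3 (x 1 1) (x 0 0) (x 1 0)
  - det3 (x 0 1) (x 0 0) (x 1 0) * det3 (x 1 0) (x 0 1) (x 1 1).

Lemma core_contractE i b c :
  (x i *m core_cross^T) b c = det3 (x i b) (x 0 (c + 1)) (x 1 (c + 1)).
Proof. by rewrite -sum_mul_cross mxE; apply: eq_bigr => l _; rewrite !mxE. Qed.

Lemma core_contract_diag i : is_diag_mx (x i *m core_cross^T).
Proof.
apply/is_diag_mxP => b c neq_bc; rewrite core_contractE.
have -> : b = c + 1.
  by apply/val_inj; move: b c neq_bc => [[|[|//]] ?] [[|[|//]] ?].
have [->|->] : i = 0 \/ i = 1.
  by case: i => [[|[|//]] ?]; [left | right]; apply/val_inj.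
  exact: det3_dup12.
exact: det3_dup13.
Qed.

Lemma det_core_diag : \det (\matrix_(i, b) (x i *m core_cross^T) b b) = core_det.
Proof.
under eq_mx do rewrite core_contractE.
rewrite det_mx22 !mxE add0r.
by have -> : (1 + 1 : 'I_2) = 0 by apply/val_inj.
Qed.

End Core.
End TripleProduct.

Lemma core_det_map (K K' : comPzRingType) (f : {rmorphism K -> K'})
    (x : 'I_2 -> 'M[K]_(2, 3)) :
  core_det (fun i => map_mx f (x i)) = f (core_det x).
Proof. by rewrite /core_det /det3 !mxE !(rmorphB, rmorphD, rmorphM). Qed.

Definition shift_core {K : comPzRingType} (i : 'I_2) : 'M[K]_(2, 3) :=
  \matrix_(b, l) (val l == val i + val b)%:R.

Lemma core_det_shift_core (K : comPzRingType) : core_det (@shift_core K) = 1.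
Proof. by rewrite /core_det /det3 !mxE /=; ring. Qed.

Section CoreDetAnalysis.
Variable R : realType.

Section PointwiseContinuity.
Variable V : topologicalType.

(* Variants of continuousD/B/M stated on lambda terms, so that [apply:] can
   decompose an unfolded polynomial expression. *)
Lemma continuous_addf (f g : V -> R) v :
  {for v, continuous f} -> {for v, continuous g} ->
  {for v, continuous (fun y => f y + g y)}.
Proof. exact: continuousD. Qed.

Lemma continuous_subf (f g : V -> R) v :
  {for v, continuous f} -> {for v, continuous g} ->
  {for v, continuous (fun y => f y - g y)}.
Proof. exact: continuousB. Qed.

Lemma continuous_mulf (f g : V -> R) v :
  {for v, continuous f} -> {for v, continuous g} ->
  {for v, continuous (fun y => f y * g y)}.
Proof. exact: continuousM. Qed.

Lemma core_det_continuous (X : V -> 'I_2 -> 'M[R]_(2, 3)) v :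
  (forall i b l, continuous (fun v => X v i b l)) ->
  {for v, continuous (fun v => core_det (X v))}.
Proof.
move=> X_cont; rewrite /core_det /det3.
repeat match goal with
  | |- {for _, continuous (fun y => @?f y - @?g y)} => apply: continuous_subf
  | |- {for _, continuous (fun y => @?f y + @?g y)} => apply: continuous_addf
  | |- {for _, continuous (fun y => @?f y * @?g y)} => apply: continuous_mulf
  end.
all: apply: X_cont.
Qed.

End PointwiseContinuity.

Lemma core_det_line_poly (x y : 'I_2 -> 'M[R]_(2, 3)) :
  exists q : {poly R}, forall t, q.[t] = core_det (fun i => x i + t *: y i).
Proof.
exists (core_det (fun i => map_mx polyC (x i) + 'X *: map_mx polyC (y i))) => t.
rewrite -horner_evalE -core_det_map; congr core_det; apply/funext => i.
by apply/matrixP => b l; rewrite !mxE /= horner_evalE !hornerE.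
Qed.

End CoreDetAnalysis.

Section Format2.
Variables (R : realType) (m n : nat).
Implicit Types T : tensor R 2 m n.

Lemma restricts_to_unit_core T (f : 'I_2 -> 'I_m) (g : 'I_3 -> 'I_n) :
  core_det (fun i => mxsub f g (slice T i)) != 0 -> restricts_to_unit T 2.
Proof.
set x := fun i => _ => x_det.
apply: (@restricts_to_unit_diag _ _ _ _ _ (rowsub f 1%:M)
  (core_cross x *m rowsub g 1%:M) (fun i => x i *m (core_cross x)^T)).
- by move=> i; rewrite trmx_mul mulmxA -mxsubE.
- exact: core_contract_diag.
- by rewrite unitmxE det_core_diag unitfE.
Qed.

Lemma restricts_to_unit_core_tr T (f : 'I_3 -> 'I_m) (g : 'I_2 -> 'I_n) :
  core_det (fun i => (mxsub f g (slice T i))^T) != 0 -> restricts_to_unit T 2.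
Proof.
set x := fun i => _ => x_det.
apply: (@restricts_to_unit_diag _ _ _ _ _ (core_cross x *m rowsub f 1%:M)
  (rowsub g 1%:M) (fun i => (x i *m (core_cross x)^T)^T)).
- by move=> i; rewrite trmx_mul !trmxK [in RHS]mxsubE !mulmxA.
- by move=> i; rewrite is_diag_trmx core_contract_diag.
- have -> : \matrix_(i, b) (x i *m (core_cross x)^T)^T b b
            = \matrix_(i, b) (x i *m (core_cross x)^T) b b.
    by apply/matrixP => i b; rewrite !mxE.
  by rewrite unitmxE det_core_diag unitfE.
Qed.

Lemma unique_typical_subrank_of_core (X : tensor R 2 m n -> 'I_2 -> 'M[R]_(2, 3))
    (D : tensor R 2 m n) :
  (forall i b l, continuous (fun T => X T i b l)) ->
  (forall T T' t i, X (T + t *: T') i = X T i + t *: X T' i) ->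
  (forall T, core_det (X T) != 0 -> restricts_to_unit T 2) ->
  core_det (X D) != 0 ->
  unique_typical_subrank R 2 m n 2.
Proof.
move=> X_cont X_lin X_unit XD.
apply: (@unique_typical_subrank_of_dense _ _ _ _ [set T | core_det (X T) != 0]).
- apply: (@open_comp _ _ (fun T => core_det (X T)) [set x : R | x != 0]).
    by move=> T _; exact: core_det_continuous.
  exact: open_neq.
- apply: (@dense_nonvanishing _ _ (fun T => core_det (X T)) D) => // T.
  have [q qE] := core_det_line_poly (X T) (X (D - T)).
  by exists q => t; rewrite qE; congr core_det; apply/funext => i; rewrite X_lin.
- by move=> T /X_unit /restricts_to_unit_is_subrank.
Qed.

Lemma unique_typical_subrank_2_n3 (m2 : (2 <= m)%N) (n3 : (3 <= n)%N) :
  unique_typical_subrank R 2 m n 2.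
Proof.
pose f := widen_ord m2; pose g := widen_ord n3.
pose D : tensor R 2 m n := tensor_of (fun i j k => (val k == val i + val j)%:R).
apply: (@unique_typical_subrank_of_core (fun T i => mxsub f g (slice T i)) D).
- move=> i b l.
  have -> : (fun T => mxsub f g (slice T i) b l)
            = fun T => T i (mxvec_index (f b) (g l)).
    by apply/funext => T; rewrite !mxE.
  exact: coord_continuous.
- by move=> T T' t i; apply/matrixP => b l; rewrite !mxE /tentry !mxE.
- by move=> T; apply: restricts_to_unit_core.
- have -> : (fun i => mxsub f g (slice D i)) = @shift_core R.
    by apply/funext => i; apply/matrixP => b l; rewrite !mxE tentry_tensor_of.
  by rewrite core_det_shift_core oner_neq0.
Qed.

Lemma unique_typical_subrank_2_m3 (m3 : (3 <= m)%N) (n2 : (2 <= n)%N) :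
  unique_typical_subrank R 2 m n 2.
Proof.
pose f := widen_ord m3; pose g := widen_ord n2.
pose D : tensor R 2 m n := tensor_of (fun i j k => (val j == val i + val k)%:R).
apply: (@unique_typical_subrank_of_core (fun T i => (mxsub f g (slice T i))^T) D).
- move=> i b l.
  have -> : (fun T => (mxsub f g (slice T i))^T b l)
            = fun T => T i (mxvec_index (f l) (g b)).
    by apply/funext => T; rewrite !mxE.
  exact: coord_continuous.
- by move=> T T' t i; apply/matrixP => b l; rewrite !mxE /tentry !mxE.
- by move=> T; apply: restricts_to_unit_core_tr.
- have -> : (fun i => (mxsub f g (slice D i))^T) = @shift_core R.
    by apply/funext => i; apply/matrixP => b l; rewrite !mxE tentry_tensor_of.
  by rewrite core_det_shift_core oner_neq0.
Qed.

End Format2.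

Theorem theorem4p4 (R : realType) (m n : nat) :
  (2 <= m)%N -> (2 <= n)%N -> ~ (m = 2%N /\ n = 2%N) ->
  typical_subrank R 2 m n 2 /\
  (forall r : nat, typical_subrank R 2 m n r -> r = 2%N).
Proof.
move=> m2 n2 not22; have [n3|n_le2] := ltnP 2 n.
  exact: unique_typical_subrank_2_n3.
have m3 : (2 < m)%N.
  rewrite ltn_neqAle eq_sym m2 andbT; apply/eqP => m_eq2.
  by apply: not22; split=> //; apply/eqP; rewrite eqn_leq n_le2 n2.
exact: unique_typical_subrank_2_m3.
Qed.
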